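(* For the class $\mathcal I_m$ of VCG auctions with bidder-specific reserves in $\{1/m,2/m,\dots,1\}$, the matrix $\Gamma^{\mathrm{VCG}}$ is $(2,1)$-admissible and implementable with complexity $m$ (with respect to learner actions $\mathcal I_m$, adversary actions = valuation profiles in $[0,1]^n$, and payoff $f(\vec r,\vec v)=\mathrm{Rev}(\vec r,\vec v)$).
   Context: Single-parameter setting: $n$ bidders, a family $\mathcal S\subseteq 2^{[n]}$ of feasible sets of bidders that can be served simultaneously, with $\emptyset\in\mathcal S$ and $\{i\}\in\mathcal S$ for every $i$. A valuation profile is $\vec v\in[0,1]^n$. A VCG auction with bidder-specific reserves $\vec r=(r_1,\dots,r_n)$: all bidders with $v_i<r_i$ are removed; if none remain nothing is allocated; otherwise a feasible set of remaining bidders maximizing $\sum v_i$ over served bidders is served, and each served bidder is charged the larger of $r_i$ and his VCG payment (the externality he imposes on the other remaining bidders, i.e., the maximum welfare of the others over feasible sets minus their welfare in the chosen allocation). $\mathrm{Rev}(\vec r,\vec v)$ is the total charge. $\mathcal I_m$ is the set of such auctions with every $r_i\in\{1/m,\dots,m/m\}$. $\Gamma^{\mathrm{VCG}}$ is the $|\mathcal I_m|\times n\lceil\log_2 m\rceil$ binary matrix whose entry in row $\vec r$ and column $j=(i-1)\lceil\log_2 m\rceil+\beta$ ($i\le n$, $1\le\beta\le\lceil\log_2 m\rceil$) is the $\beta$-th bit of the binary representation of the integer $mr_i$. A matrix $\Gamma$ (rows indexed by learner actions $x$) is $(\kappa,\delta)$-admissible if its rows are pairwise distinct, each column has at most $\kappa$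 distinct values, and distinct values in a column differ by at least $\delta$. It is implementable with complexity $M$ if for each column $j$ there is a finite set $S_j$ of pairs $(w,y)$ with weight $w\ge0$ and adversary action $y$, $|S_j|\le M$, such that $\Gamma_{xj}-\Gamma_{x'j}=\sum_{(w,y)\in S_j}w(f(x,y)-f(x',y))$ for all learner actions $x,x'$. *)

From HB Require Import structures.
From mathcomp Require Import all_boot all_order all_algebra.
From Stdlib Require Lists.List.
Set Implicit Arguments. Unset Strict Implicit. Unset Printing Implicit Defensive.
Import Order.TTheory GRing.Theory Num.Theory.
Local Open Scope ring_scope.

Section Auction.
Variables (R : realFieldType) (n : nat).

Definition welfare (v : 'I_n -> R) (T : {set 'I_n}) : R := \sum_(i in T) v i.

Definition remaining (r v : 'I_n -> R) : {set 'I_n} := [set i | r i <= v i].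

(* maximum welfare over feasible sets contained in A (set0 is feasible, so
   starting the max at 0 gives exactly the maximum) *)
Definition maxwelfare (S : {set {set 'I_n}}) (v : 'I_n -> R) (A : {set 'I_n}) : R :=
  \big[Num.max/0]_(T in S | T \subset A) welfare v T.

Definition is_alloc (S : {set {set 'I_n}})
    (alloc : ('I_n -> R) -> ('I_n -> R) -> {set 'I_n}) : Prop :=
  forall r v, [/\ alloc r v \in S, alloc r v \subset remaining r v &
    forall T, T \in S -> T \subset remaining r v -> welfare v T <= welfare v (alloc r v)].

Definition vcg_pay (S : {set {set 'I_n}})
    (alloc : ('I_n -> R) -> ('I_n -> R) -> {set 'I_n}) (r v : 'I_n -> R) (i : 'I_n) : R :=
  maxwelfare S v (remaining r v :\ i) - welfare v (alloc r v :\ i).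

Definition Rev (S : {set {set 'I_n}})
    (alloc : ('I_n -> R) -> ('I_n -> R) -> {set 'I_n}) (r v : 'I_n -> R) : R :=
  \sum_(i in alloc r v) Num.max (r i) (vcg_pay S alloc r v i).

(* learner actions of I_m: x i : 'I_m encodes reserve r_i = (x i + 1)/m *)
Definition reserve (m : nat) (x : {ffun 'I_n -> 'I_m}) : 'I_n -> R :=
  fun i => (x i).+1%:R / m%:R.

Definition valprofile (v : 'I_n -> R) : Prop := forall i, 0 <= v i <= 1.

End Auction.

(* Column (i, beta) with beta : 'I_(up_log 2 m), i.e. beta+1 in
   {1..ceil(log2 m)}, corresponds to j = (i-1) ceil(log2 m) + (beta+1); the entry
   is bit beta (least significant = bit 0) of the integer m r_i = x i + 1. *)
Definition GammaVCG (R : realFieldType) (n m : nat)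
    (x : {ffun 'I_n -> 'I_m}) (j : 'I_n * 'I_(up_log 2 m)) : R :=
  (odd ((x j.1).+1 %/ 2 ^ j.2))%:R.

Definition admissible (R : realFieldType) (X C : finType) (G : X -> C -> R)
    (kappa : nat) (delta : R) : Prop :=
  [/\ forall x x', (forall j, G x j = G x' j) -> x = x',
      forall j, (size (undup [seq G x j | x <- enum X]) <= kappa)%N &
      forall j x x', G x j != G x' j -> delta <= `|G x j - G x' j| ].

Definition implementable (R : realFieldType) (X C Y : Type) (adv : Y -> Prop)
    (f : X -> Y -> R) (G : X -> C -> R) (M : nat) : Prop :=
  forall j : C, exists s : seq (R * Y),
    [/\ (size s <= M)%N,
        forall p, Stdlib.Lists.List.In p s -> 0 <= p.1 /\ adv p.2 &
        forall x x', G x j - G x' j = \sum_(p <- s) p.1 * (f x p.2 - f x' p.2)].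

From mathcomp Require Import all_boot all_order all_algebra.
From mathcomp Require Import ring lra.
Set Implicit Arguments. Unset Strict Implicit. Unset Printing Implicit Defensive.
Import Order.TTheory GRing.Theory Num.Theory.

(* Admissibility: every entry is a bit, hence 0 or 1, and the ceil(log2 m)
   low bits of an integer in {1, ..., m} determine it.
   Implementability: on the profile where bidder i bids h/m and everybody else
   bids 0, only i can be served and he pays his reserve, so the revenue is
   r_i if m r_i <= h and 0 otherwise.  Column (i, beta) is a function
   g (m r_i) of r_i alone.  With W a := m (g a + m) / a for a <= m and
   W (m + 1) := 0, the combination sum_h (W h - W (h + 1)) Rev (r, h/m e_i)
   telescopes to W (m r_i) r_i = g (m r_i) + m; the constant m cancels in the
   difference of two rows and makes the weights nonnegative. *)

Lemma eq_modn_bits (k a b : nat) :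
  (forall beta, beta < k -> odd (a %/ 2 ^ beta) = odd (b %/ 2 ^ beta)) ->
  a = b %[mod 2 ^ k].
Proof.
elim: k a b => [|k IHk] a b eq_bits; first by rewrite !modn1.
have odd_eq : odd a = odd b by have := eq_bits 0 isT; rewrite !divn1.
have half_eq : a %/ 2 = b %/ 2 %[mod 2 ^ k].
  by apply: IHk => beta lt_beta; rewrite -!divnMA -expnS; apply: eq_bits.
rewrite -[a %% _]odd_double_half -[b %% _]odd_double_half.
by rewrite !odd_mod ?oddX ?andbF // -!divn2 expnSr -!modn_divl half_eq odd_eq.
Qed.

Lemma modn_inj_pos (d a b : nat) :
  0 < a <= d -> 0 < b <= d -> a = b %[mod d] -> a = b.
Proof.
move=> /andP[a_gt0 le_a_d] /andP[b_gt0 le_b_d] eq_ab.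
have : a.-1 = b.-1 %[mod d].
  by apply/eqP; rewrite -(eqn_modDr 1) !addn1 !prednK // eq_ab.
rewrite !modn_small ?prednK // => /(congr1 succn).
by rewrite !prednK.
Qed.

Lemma In_map_mem (A : eqType) (B : Type) (f : A -> B) (s : seq A) (y : B) :
  List.In y (map f s) -> exists2 x, x \in s & y = f x.
Proof.
elim: s => //= a s IHs [<-|/IHs[x x_s ->]]; first by exists a; rewrite ?mem_head.
by exists x; rewrite // inE x_s orbT.
Qed.

Local Open Scope ring_scope.

Lemma size_undup_natr_bool (R : numDomainType) (T : eqType) (f : T -> bool) (s : seq T) :
  (size (undup [seq (f t)%:R : R | t <- s]) <= 2)%N.
Proof.
apply: (@leq_trans (size [:: (0 : R); 1])) => //.
apply: uniq_leq_size; first exact: undup_uniq.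
by move=> y; rewrite mem_undup => /mapP[t _ ->]; rewrite !inE; case: (f t); rewrite eqxx ?orbT.
Qed.

Lemma natr_bool_dist (R : numDomainType) (b b' : bool) :
  (b%:R : R) != b'%:R -> 1 <= `|b%:R - b'%:R : R|.
Proof. by case: b; case: b'; rewrite ?eqxx // ?subr0 ?sub0r ?normrN normr1. Qed.

Lemma GammaVCG_row_inj (R : realFieldType) (n m : nat) (x x' : {ffun 'I_n -> 'I_m}) :
  (forall j, GammaVCG R x j = GammaVCG R x' j) -> x = x'.
Proof.
move=> eq_rows; apply/ffunP => i; apply/val_inj/succn_inj.
have le_m_2k : (m <= 2 ^ up_log 2 m)%N by apply: up_logP.
apply: (@modn_inj_pos (2 ^ up_log 2 m)); rewrite ?(leq_trans (ltn_ord _)) //.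
apply: eq_modn_bits => beta lt_beta.
move: (eq_rows (i, Ordinal lt_beta)); rewrite /GammaVCG /=.
by case: odd; case: odd => // /eqP; rewrite eqr_nat.
Qed.

Lemma GammaVCG_admissible (R : realFieldType) (n m : nat) :
  admissible (@GammaVCG R n m) 2 1.
Proof.
split=> [x x' /GammaVCG_row_inj // | [i beta] | j x x'].
- exact: size_undup_natr_bool.
- exact: natr_bool_dist.
Qed.

Section PointProfile.
Variables (R : realFieldType) (n m : nat).
Hypothesis m_gt0 : (0 < m)%N.

Definition point_profile (i : 'I_n) (h : nat) : 'I_n -> R :=
  fun k => if k == i then h%:R / m%:R else 0.

Lemma point_profile_valprofile i h : (h <= m)%N -> valprofile (point_profile i h).
Proof.
move=> le_h_m k; rewrite /point_profile; case: eqP => _; last by rewrite lexx ler01.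
by rewrite divr_ge0 ?ler0n //= ler_pdivrMr ?ltr0n // mul1r ler_nat.
Qed.

Lemma remaining_point (x : {ffun 'I_n -> 'I_m}) i h :
  remaining (reserve R x) (point_profile i h) = if (x i < h)%N then [set i] else set0.
Proof.
apply/setP => k; rewrite /remaining /reserve /point_profile !inE.
case: (k =P i) => [->|ne_ki].
  by rewrite ler_pM2r ?invr_gt0 ?ltr0n // ler_nat; case: ifP; rewrite ?inE ?eqxx.
have reserve_gt0 : 0 < (x k).+1%:R / (m%:R : R) by rewrite divr_gt0 ?ltr0n.
by rewrite leNgt reserve_gt0; case: ifP; rewrite ?inE //; move/eqP: ne_ki => /negbTE.
Qed.

Variables (S : {set {set 'I_n}}) (alloc : ('I_n -> R) -> ('I_n -> R) -> {set 'I_n}).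
Hypotheses (S1 : forall i, [set i] \in S) (alloc_opt : is_alloc S alloc).

Lemma alloc_point (x : {ffun 'I_n -> 'I_m}) i h :
  alloc (reserve R x) (point_profile i h) = if (x i < h)%N then [set i] else set0.
Proof.
have [_ sub_rem opt] := alloc_opt (reserve R x) (point_profile i h).
rewrite remaining_point in sub_rem opt; case: ifP => lt_xi_h in sub_rem opt *.
  move: sub_rem; rewrite subset1 => /orP[/eqP // | /eqP alloc0].
  have := opt [set i] (S1 i) (subxx _).
  rewrite alloc0 /welfare big_set0 big_set1 /point_profile eqxx leNgt divr_gt0 ?ltr0n //.
  exact: leq_trans lt_xi_h.
by apply/eqP; rewrite -subset0.
Qed.

Lemma Rev_point (x : {ffun 'I_n -> 'I_m}) i h :
  Rev S alloc (reserve R x) (point_profile i h) = if (x i < h)%N then reserve R x i else 0.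
Proof.
rewrite /Rev alloc_point; case: ifP => lt_xi_h; last by rewrite big_set0.
rewrite big_set1 /vcg_pay remaining_point alloc_point lt_xi_h setDv /welfare big_set0 subr0.
have -> : maxwelfare S (point_profile i h) set0 = 0.
  apply: (big_ind (fun y => y = 0)) => [| y z -> -> | T /andP[_]]; first by [].
    by rewrite maxxx.
  by rewrite subset0 => /eqP ->; exact: big_set0.
by apply/max_idPl; rewrite divr_ge0 ?ler0n.
Qed.

End PointProfile.

Section TailWeight.
Variables (R : realFieldType) (m : nat) (g : nat -> R).

Definition tail_weight (k : nat) : R :=
  if (k <= m)%N then m%:R * (g k + m%:R) / k%:R else 0.

Lemma tail_weight_ge (g01 : forall k, 0 <= g k <= 1) (h : nat) :
  (0 < h <= m)%N -> tail_weight h.+1 <= tail_weight h.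
Proof.
case/andP=> h_gt0 le_h_m; rewrite /tail_weight le_h_m.
have [/andP[gh_ge0 gh_le1] /andP[gh1_ge0 gh1_le1]] := (g01 h, g01 h.+1).
have m_ge0 : 0 <= (m%:R : R) by rewrite ler0n.
case: ifP => le_h1_m; last by rewrite divr_ge0 ?mulr_ge0 ?addr_ge0 ?ler0n.
rewrite ler_pdivrMr ?ltr0n // mulrAC ler_pdivlMr ?ltr0n // -!mulrA ler_wpM2l //.
have h_ge0 : 0 <= (h%:R : R) by rewrite ler0n.
have : (h%:R : R) <= m%:R by rewrite ler_nat.
rewrite -natr1; nra.
Qed.

Lemma sum_tail_weight_step (a : nat) : (0 < a <= m)%N ->
  \sum_(1 <= h < m.+1) (tail_weight h - tail_weight h.+1) *
     (if (a <= h)%N then a%:R / m%:R else 0) = g a + m%:R.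
Proof.
case/andP=> a_gt0 le_a_m.
rewrite (big_cat_nat _ (n := a)) ?leqW //= big_nat_cond big1 ?add0r; last first.
  by move=> h /andP[/andP[_ lt_h_a] _]; rewrite leqNgt lt_h_a mulr0.
under eq_big_nat => h /andP[le_a_h _] do rewrite le_a_h.
rewrite -mulr_suml (telescope_sumr_eq (fun k => - tail_weight k)) ?leqW //; last first.
  by move=> k _; rewrite opprK addrC.
rewrite /tail_weight ltnn le_a_m opprK oppr0 add0r.
by field; rewrite !pnatr_eq0 -!lt0n a_gt0 (leq_trans a_gt0).
Qed.

End TailWeight.

Lemma GammaVCG_implementable (R : realFieldType) (n m : nat) (m_gt0 : (0 < m)%N)
    (S : {set {set 'I_n}}) (S1 : forall i, [set i] \in S)
    (alloc : ('I_n -> R) -> ('I_n -> R) -> {set 'I_n}) (alloc_opt : is_alloc S alloc) :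
  implementable (@valprofile R n)
    (fun x v => Rev S alloc (reserve R x) v) (@GammaVCG R n m) m.
Proof.
move=> [i beta]; pose g a : R := (odd (a %/ 2 ^ beta))%:R.
have g01 a : 0 <= g a <= 1 by rewrite /g; case: odd; rewrite ?lexx ?ler01.
exists [seq (tail_weight m g h - tail_weight m g h.+1, point_profile R m i h)
         | h <- index_iota 1 m.+1]; split.
- by rewrite size_map size_iota subn1.
- move=> p p_in; have [h] := In_map_mem p_in.
  rewrite mem_index_iota => /andP[h_gt0 lt_h_m1] ->.
  by split; [rewrite subr_ge0 tail_weight_ge ?h_gt0 | exact: point_profile_valprofile].
- move=> x x'; rewrite big_map.
  under eq_bigr do rewrite !(Rev_point m_gt0 S1 alloc_opt) mulrBr.
  rewrite sumrB !sum_tail_weight_step ?ltn_ord //.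
  by rewrite opprD addrACA subrr addr0.
Qed.

Theorem lemma3p1 (R : realFieldType) (n m : nat) (hm : (0 < m)%N)
    (S : {set {set 'I_n}}) (hS0 : set0 \in S) (hS1 : forall i, [set i] \in S)
    (alloc : ('I_n -> R) -> ('I_n -> R) -> {set 'I_n})
    (halloc : is_alloc S alloc) :
  admissible (@GammaVCG R n m) 2 1 /\
  implementable (@valprofile R n)
    (fun x v => Rev S alloc (reserve R x) v) (@GammaVCG R n m) m.
Proof.
split; first exact: GammaVCG_admissible.
exact: GammaVCG_implementable hm S hS1 alloc halloc.
Qed.
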